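(* Let $\phi$ be an absolutely bounded, Lipschitz and internally stable feature map with constants $v_1,v_2,v_3$, let $R=[0,1]^2$, and let $\mathcal{X}$ be a bi-filtration of size $n$. Let $s\in\mathbb{N}$, $u=2^{-s}$, and let $(B_1,B_2)$ be a box pair with centers $c_1<c_2$. Then for all $(p,q)\in B_1\times B_2$ with $p<q$, $$|\Phi_{\mathcal{X}}(p,q)-\Phi_{\mathcal{X}}(c_1,c_2)|\le\frac{v_3 n}{\sqrt2}D+v_1 nW+v_2 nL.$$
   Context: For $p,q\in\mathbb{R}^2$ write $p\le q$ (resp. $p<q$) if both coordinates satisfy $\le$ (resp. $<$). A mono-filtration of a finite simplicial complex $X$ assigns nested subcomplexes $\mathcal{X}(\alpha)$, $\alpha\in\mathbb{R}$; its size is the number of simplices. A bi-filtration $\mathcal{X}$ assigns to $p\in\mathbb{R}^2$ a subcomplex $\mathcal{X}(p)$ with $\mathcal{X}(p)\subseteq\mathcal{X}(q)$ for $p\le q$; it is tame, and its size is the total number of critical points over all simplices (where $p$ is critical for $\sigma$ if for every $\epsilon>0$, $\sigma\notin\mathcal{X}(p_1-\epsilon,p_2)\cup\mathcal{X}(p_1,p_2-\epsilon)$ and $\sigma\in\mathcal{X}(p_1+\epsilon,p_2)\cap\mathcal{X}(p_1,p_2+\epsilon)$); every slice of a bi-filtration of size $n$ has size at most $n$. Let $\mathcal{L}$ be the set of non-vertical lines in $\mathbb{R}^2$ with positive slope (''slices''); each $\ell\in\mathcal{L}$ meets $x=-y$ in a unique point $b$ and is parametrized as $b+\lambda a$ with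 $a=(a_1,a_2)$ its unit direction vector with positive coordinates; its weight is $\hat{\ell}:=\min\{a_1,a_2\}$; for a point $p\in\ell$, $\lambda_p$ denotes the parameter with $p=b+\lambda_pa$; the slice $\mathcal{X}_\ell$ is the mono-filtration $\alpha\mapsto\mathcal{X}(b+\alpha a)$. $d_B$ is the bottleneck distance between persistence diagrams of mono-filtrations. $\Delta^{(1)}:=\{(x_1,x_2):x_1<x_2\}$. A feature map $\phi$ assigns to each mono-filtration $\mathcal{X}$ a function $\phi_{\mathcal{X}}\in L^2(\Delta^{(1)})$; absolutely bounded: $0\le\phi_{\mathcal{X}}(x)\le v_1n$; Lipschitz: $|\phi_{\mathcal{X}}(x)-\phi_{\mathcal{X}}(x')|\le v_2n\|x-x'\|_2$; internally stable: $|\phi_{\mathcal{X}}(x)-\phi_{\mathcal{Y}}(x)|\le v_3n\,d_B(\mathcal{X},\mathcal{Y})$; each for all mono-filtrations of size $n$ and all $x,x'\in\Delta^{(1)}$. $\Delta^{(2)}:=\{(p,q)\in\mathbb{R}^2\times\mathbb{R}^2:p<q\}$; for $(p,q)\in\Delta^{(2)}$ with $\ell$ the line through $p,q$, $\Phi_{\mathcal{X}}(p,q):=\chi_R(p)\chi_R(q)\,\hat{\ell}\,\phi_{\mathcal{X}_\ell}(\lambda_p,\lambda_q)$. Boxes: $R$ is split into $2^s\times2^s$ congruent closed squares of side $u$; a box pair is an ordered pair $(B_1,B_2)$ of such boxes, with centers $c_1,c_2$. A slice $\ell\in\mathcal{L}$ traverses $(B_1,B_2)$ if it meets both $B_1$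 and $B_2$; the center slice $\ell_c$ is the line through $c_1$ and $c_2$. $D$ is the supremum of $d_B(\mathcal{X}_{\ell_c},\mathcal{X}_\ell)$ over all slices $\ell$ traversing $(B_1,B_2)$; $W$ is the supremum of $|\hat{\ell_c}-\hat{\ell}|$ over traversing slices $\ell$; $L_1$ is the supremum of $|\lambda_p-\lambda_{c_1}|$ over traversing slices $\ell$ and points $p\in\ell\cap B_1$ (with $\lambda_p$ along $\ell$ and $\lambda_{c_1}$ along $\ell_c$), $L_2$ is defined likewise with $B_2$ and $c_2$, and $L:=\max\{L_1,L_2\}$. *)

From HB Require Import structures.
From mathcomp Require Import all_boot all_order all_algebra.
From mathcomp Require Import all_classical all_reals all_analysis.

Set Implicit Arguments.
Unset Strict Implicit.
Unset Printing Implicit Defensive.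
Import Order.TTheory GRing.Theory Num.Theory.
Local Open Scope classical_set_scope.
Local Open Scope ring_scope.

Definition is_complex (V : finType) (K : {set {set V}}) : Prop :=
  (@finset.set0 V) \notin K /\
  forall s t : {set V}, s \in K -> t \subset s -> t != @finset.set0 _ -> t \in K.

Section Homology.
Variables (F : fieldType) (V : finType).

Definition chain := {ffun {set V} -> F^o}.

Definition schain (s : {set V}) : chain := [ffun t => ((t == s)%:R : F)].

(* orientation induced by the order enum_rank on V *)
Definition vpos (s : {set V}) (v : V) : nat :=
  #|[set w in s | (enum_rank w < enum_rank v)%N]|.

Definition bd_simplex (s : {set V}) : chain :=
  if (2 <= #|s|)%N then
    \sum_(v in s) ((-1) ^+ vpos s v : F) *: schain (s :\ v)
  else 0.

Definition bd (c : chain) : chain := \sum_(s : {set V}) c s *: bd_simplex s.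

(* k-chains supported on the k-simplices (k+1 vertices) of A *)
Definition Cspace (k : nat) (A : {set {set V}}) : {vspace chain} :=
  <<[seq schain s | s <- seq.filter (fun s : {set V} => #|s| == k.+1) (enum A)]>>%VS.

Definition Zspace (k : nat) (A : {set {set V}}) : {vspace chain} :=
  (Cspace k A :&: lker (linfun bd))%VS.

Definition Bspace (k : nat) (B : {set {set V}}) : {vspace chain} :=
  <<[seq bd (schain s) | s <- seq.filter (fun s : {set V} => #|s| == k.+2) (enum B)]>>%VS.

(* rank of the map H_k(A) -> H_k(B) induced by inclusion (A \subset B) *)
Definition prank (k : nat) (A B : {set {set V}}) : nat :=
  (\dim (Zspace k A) - \dim (Zspace k A :&: Bspace k B))%N.
End Homology.

(* Mono-filtrations: a finite simplicial complex K with entry values  *)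
(* f, the subcomplex at alpha being {s in K | f s <= alpha}.          *)
Record monofilt (R : realType) (V : finType) := MonoFilt {
  mK : {set {set V}};
  mf : {set V} -> R }.

Section Mono.
Variables (R : realType) (V : finType).
Implicit Type Y : monofilt R V.

Definition valid_monofilt Y : Prop :=
  is_complex (mK Y) /\
  forall s t : {set V}, s \in mK Y -> t \subset s -> t != @finset.set0 _ -> mf Y t <= mf Y s.

Definition msub Y (a : R) := [set s in mK Y | mf Y s <= a].
Definition mlt Y (a : R) := [set s in mK Y | mf Y s < a].

Definition msize Y : nat := #|mK Y|.

Definition mvals Y : seq R := undup [seq mf Y s | s <- enum (mK Y)].

(* persistence diagram in homology degree k, coefficients in F:
   the multiset of points (birth, death), death possibly +oo *)
Definition pd_mult (F : fieldType) (k : nat) Y (a b : R) : nat :=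
  ((prank F k (msub Y a) (mlt Y b) + prank F k (mlt Y a) (msub Y b))
   - (prank F k (mlt Y a) (mlt Y b) + prank F k (msub Y a) (msub Y b)))%N.

Definition pd_ess (F : fieldType) (k : nat) Y (a : R) : nat :=
  (prank F k (msub Y a) (mK Y) - prank F k (mlt Y a) (mK Y))%N.

Definition pdiagram (F : fieldType) (k : nat) Y : seq (R * \bar R) :=
  flatten [seq nseq (pd_mult F k Y ab.1 ab.2) (ab.1, (ab.2)%:E)
          | ab <- seq.filter (fun ab : R * R => ab.1 < ab.2)
                  [seq (a, b) | a <- mvals Y, b <- mvals Y]]
  ++ flatten [seq nseq (pd_ess F k Y a) (a, +oo%E) | a <- mvals Y].
End Mono.

Section Bottleneck.
Variable R : realType.

Definition pt_close (d : R) (p q : R * \bar R) : Prop :=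
  `|p.1 - q.1| <= d /\
  ((p.2 = +oo%E /\ q.2 = +oo%E) \/
   exists d1 d2 : R, p.2 = d1%:E /\ q.2 = d2%:E /\ `|d1 - d2| <= d).

(* L_infty distance to the diagonal is at most d *)
Definition diag_close (d : R) (p : R * \bar R) : Prop :=
  exists e : R, p.2 = e%:E /\ (e - p.1) / 2 <= d.

Definition pt0 : R * \bar R := (0, 0%:E).

Definition dmatching (d : R) (P Q : seq (R * \bar R)) : Prop :=
  exists M : seq (nat * nat),
    uniq (unzip1 M) /\ uniq (unzip2 M) /\
    (forall ij, ij \in M ->
       [/\ (ij.1 < size P)%N, (ij.2 < size Q)%N &
           pt_close d (nth pt0 P ij.1) (nth pt0 Q ij.2)]) /\
    (forall i, (i < size P)%N -> i \notin unzip1 M -> diag_close d (nth pt0 P i)) /\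
    (forall j, (j < size Q)%N -> j \notin unzip2 M -> diag_close d (nth pt0 Q j)).

Definition bottleneck (P Q : seq (R * \bar R)) : \bar R :=
  ereal_inf [set (d%:E)%E | d in [set d : R | 0 <= d /\ dmatching d P Q]].
End Bottleneck.

Definition dB (R : realType) (F : fieldType) (k : nat) (V1 V2 : finType)
  (Y1 : monofilt R V1) (Y2 : monofilt R V2) : \bar R :=
  bottleneck (pdiagram F k Y1) (pdiagram F k Y2).

Definition featmap (R : realType) :=
  forall V : finType, monofilt R V -> R * R -> R.

Definition Delta1 (R : realType) : set (R * R) := [set x | x.1 < x.2].

Definition is_feature_map (R : realType) (phi : featmap R) : Prop :=
  forall (V : finType) (Y : monofilt R V), valid_monofilt Y ->
    measurable_fun (@Delta1 R) (phi V Y) /\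
    ((@lebesgue_measure R) \x (@lebesgue_measure R))%E.-integrable (@Delta1 R)
        (fun x => ((phi V Y x) ^+ 2)%:E).

Definition abs_bounded (R : realType) (phi : featmap R) (v1 : R) : Prop :=
  forall (V : finType) (Y : monofilt R V), valid_monofilt Y ->
    forall x, @Delta1 R x -> 0 <= phi V Y x <= v1 * (msize Y)%:R.

Definition norm2 (R : realType) (x : R * R) : R := Num.sqrt (x.1 ^+ 2 + x.2 ^+ 2).

Definition lipschitz_fm (R : realType) (phi : featmap R) (v2 : R) : Prop :=
  forall (V : finType) (Y : monofilt R V), valid_monofilt Y ->
    forall x x', @Delta1 R x -> @Delta1 R x' ->
      `|phi V Y x - phi V Y x'| <= v2 * (msize Y)%:R * norm2 (x.1 - x'.1, x.2 - x'.2).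

Definition int_stable (R : realType) (F : fieldType) (k : nat) (phi : featmap R) (v3 : R) :
  Prop :=
  forall (V1 V2 : finType) (Y1 : monofilt R V1) (Y2 : monofilt R V2),
    valid_monofilt Y1 -> valid_monofilt Y2 -> msize Y1 = msize Y2 ->
    forall x, @Delta1 R x ->
      ((`|phi V1 Y1 x - phi V2 Y2 x|)%:E <= (v3 * (msize Y1)%:R)%:E * dB F k Y1 Y2)%E.

Definition leR2 (R : realType) (p q : R * R) : bool := (p.1 <= q.1) && (p.2 <= q.2).
Definition ltR2 (R : realType) (p q : R * R) : bool := (p.1 < q.1) && (p.2 < q.2).

(* A tame bi-filtration, given by a finite complex K and, for every simplex,
   the (finite) list of its critical points: X(p) = {s | some crit. point <= p} *)
Record bifilt (R : realType) (V : finType) := BiFilt {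
  bK : {set {set V}};
  bcrit : {set V} -> seq (R * R) }.

Section Bi.
Variables (R : realType) (V : finType).
Implicit Type X : bifilt R V.

Definition bX X (p : R * R) : {set {set V}} :=
  [set s in bK X | has (fun c => leR2 c p) (bcrit X s)].

Definition critical X (s : {set V}) (p : R * R) : Prop :=
  forall e : R, 0 < e ->
    s \notin bX X (p.1 - e, p.2) :|: bX X (p.1, p.2 - e) /\
    s \in bX X (p.1 + e, p.2) :&: bX X (p.1, p.2 + e).

Definition valid_bifilt X : Prop :=
  is_complex (bK X) /\
  (forall p, forall s t : {set V}, s \in bX X p -> t \subset s -> t != @finset.set0 _ -> t \in bX X p) /\
  (forall s, uniq (bcrit X s)) /\
  (forall s, s \notin bK X -> bcrit X s = [::]) /\
  (forall s p, p \in bcrit X s <-> critical X s p).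

Definition bsize X : nat := (\sum_(s in bK X) size (bcrit X s))%N.

Definition is_slice (b a : R * R) : Prop :=
  b.1 = - b.2 /\ 0 < a.1 /\ 0 < a.2 /\ a.1 ^+ 2 + a.2 ^+ 2 = 1.

Definition lpt (b a : R * R) (l : R) : R * R := (b.1 + l * a.1, b.2 + l * a.2).

Definition on_line (b a p : R * R) : Prop := exists l, p = lpt b a l.

Definition weight (a : R * R) : R := Num.min a.1 a.2.

(* lambda_p for p on the slice with direction a (b lies on x = -y) *)
Definition lam (a p : R * R) : R := (p.1 + p.2) / (a.1 + a.2).

Definition slice X (b a : R * R) : monofilt R V :=
  MonoFilt [set s in bK X | bcrit X s != [::]]
           (fun s => inf [set l : R | s \in bX X (lpt b a l)]).

Definition ldir (p q : R * R) : R * R :=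
  let N := norm2 (q.1 - p.1, q.2 - p.2) in ((q.1 - p.1) / N, (q.2 - p.2) / N).
Definition lbase (p q : R * R) : R * R :=
  lpt p (ldir p q) (- lam (ldir p q) p).

Definition unit_sq : set (R * R) := [set p | 0 <= p.1 <= 1 /\ 0 <= p.2 <= 1].
Definition chiR (p : R * R) : R := if `[< unit_sq p >] then 1 else 0.

Definition Phi (phi : featmap R) X (p q : R * R) : R :=
  chiR p * chiR q * weight (ldir p q)
  * phi V (slice X (lbase p q) (ldir p q)) (lam (ldir p q) p, lam (ldir p q) q).

Definition side (s : nat) : R := (2 ^+ s)^-1.
Definition gbox (s : nat) (i j : 'I_(2 ^ s)) : set (R * R) :=
  [set p | i%:R * side s <= p.1 <= i.+1%:R * side s /\
           j%:R * side s <= p.2 <= j.+1%:R * side s].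
Definition gcenter (s : nat) (i j : 'I_(2 ^ s)) : R * R :=
  ((i%:R + 2^-1) * side s, (j%:R + 2^-1) * side s).

Definition traverses (B1 B2 : set (R * R)) (b a : R * R) : Prop :=
  is_slice b a /\ (exists l, B1 (lpt b a l)) /\ (exists l, B2 (lpt b a l)).

Definition Dsup (F : fieldType) (k : nat) X (B1 B2 : set (R * R)) (c1 c2 : R * R)
  : \bar R :=
  ereal_sup [set x | exists b a, traverses B1 B2 b a /\
     x = dB F k (slice X (lbase c1 c2) (ldir c1 c2)) (slice X b a)].

Definition Wsup (B1 B2 : set (R * R)) (c1 c2 : R * R) : \bar R :=
  ereal_sup [set x | exists b a, traverses B1 B2 b a /\
     x = (`|weight (ldir c1 c2) - weight a|)%:E].

Definition Lsup_i (B1 B2 B : set (R * R)) (c1 c2 c : R * R) : \bar R :=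
  ereal_sup [set x | exists b a p, traverses B1 B2 b a /\ B p /\ on_line b a p /\
     x = (`|lam a p - lam (ldir c1 c2) c|)%:E].

Definition Lsup (B1 B2 : set (R * R)) (c1 c2 : R * R) : \bar R :=
  maxe (Lsup_i B1 B2 B1 c1 c2 c1) (Lsup_i B1 B2 B2 c1 c2 c2).
End Bi.

(* Along the slice l through p and q, Phi(p,q) = w_l * phi(X_l)(x_l) with
   x_l = (lambda_p, lambda_q), and likewise along the center slice l_c.
   Going from l to l_c in three steps gives
     |w_l A - w_c C| <= |w_c - w_l| A + w_c |B - A| + w_c |B - C|,
   where A = phi(X_l)(x_l), B = phi(X_{l_c})(x_l), C = phi(X_{l_c})(x_c).
   Absolute boundedness and the definition of W control the first term,
   internal stability and D the second, the Lipschitz property and L the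
   third; the factor 1/sqrt 2 comes from w_c <= 1/sqrt 2 for a unit
   direction, which also absorbs the Euclidean norm into the max-norm L. *)
From HB Require Import structures.
From mathcomp Require Import all_boot all_order all_algebra.
From mathcomp Require Import all_classical all_reals all_analysis.
From mathcomp Require Import ring lra.
Import Order.TTheory GRing.Theory Num.Theory.
Local Open Scope classical_set_scope.
Local Open Scope ring_scope.
Set Implicit Arguments.
Unset Strict Implicit.

Section RealFacts.
Variable R : realType.

Lemma seq_has_lbound (T : eqType) (f : T -> R) (cs : seq T) :
  exists m, forall c, c \in cs -> m <= f c.
Proof.
elim: cs => [|c cs [m Hm]]; first by exists 0.
exists (Num.min (f c) m) => c'; rewrite in_cons => /orP[/eqP->|/Hm H].
  by rewrite ge_min lexx.
by rewrite ge_min H orbT.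
Qed.

Lemma weighted_dist_le (wl wc A B C : R) : 0 <= A -> 0 <= wc ->
  `|wl * A - wc * C| <= wc * `|B - A| + `|wc - wl| * A + wc * `|B - C|.
Proof.
move=> A0 wc0.
have -> : wl * A - wc * C = (wl - wc) * A + wc * (A - B) + wc * (B - C) by ring.
apply: le_trans (ler_normD _ _) _; apply: lerD; last by rewrite normrM ger0_norm.
apply: le_trans (ler_normD _ _) _; rewrite !normrM (ger0_norm A0) (ger0_norm wc0).
by rewrite distrC [`|A - B|]distrC addrC.
Qed.

Lemma norm2_le_max (x y : R) :
  norm2 (x, y) <= Num.sqrt 2 * Num.max `|x| `|y|.
Proof.
set M := Num.max _ _.
have M0 : 0 <= M by rewrite le_max normr_ge0.
have sqr_le (z : R) : `|z| <= M -> z ^+ 2 <= M ^+ 2.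
  by move=> zM; rewrite -real_normK ?num_real // lerXn2r // nnegrE.
have x2 : x ^+ 2 <= M ^+ 2 by apply: sqr_le; rewrite le_max lexx.
have y2 : y ^+ 2 <= M ^+ 2 by apply: sqr_le; rewrite le_max lexx orbT.
rewrite /norm2 /= -[M in X in _ <= X]ger0_norm // -sqrtr_sqr -sqrtrM //.
by apply: ler_wsqrtr; lra.
Qed.

Lemma weight_ge0 (a : R * R) : 0 < a.1 -> 0 < a.2 -> 0 <= weight a.
Proof. by move=> a1 a2; rewrite le_min !ltW. Qed.

Lemma unit_weight_le (a : R * R) : 0 < a.1 -> 0 < a.2 -> a.1 ^+ 2 + a.2 ^+ 2 = 1 ->
  weight a <= (Num.sqrt 2)^-1.
Proof.
move=> a1 a2 a3; rewrite /weight.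
set w := Num.min _ _.
have w0 : 0 <= w by rewrite le_min !ltW.
have w1 : w <= a.1 by rewrite ge_min lexx.
have w2 : w <= a.2 by rewrite ge_min lexx orbT.
have s2 : 0 < Num.sqrt 2 :> R by rewrite sqrtr_gt0.
rewrite -[(Num.sqrt 2)^-1]mul1r ler_pdivlMr //.
have h2 : Num.sqrt 2 ^+ 2 = 2 :> R by rewrite sqr_sqrtr.
have : 0 <= w * Num.sqrt 2 by rewrite mulr_ge0 // ltW.
have : (w * Num.sqrt 2) ^+ 2 <= 1 by rewrite exprMn h2; nra.
move: (w * Num.sqrt 2) => y; nra.
Qed.

Lemma dB_ge0 (F : fieldType) (k : nat) (V1 V2 : finType)
    (Y1 : monofilt R V1) (Y2 : monofilt R V2) :
  (0 <= dB F k Y1 Y2)%E.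
Proof. by apply: le_ereal_inf_tmp => _ [d [d0 _] <-]; rewrite lee_fin. Qed.

End RealFacts.

Section Slices.
Variables (R : realType) (V : finType).
Implicit Types (X : bifilt R V) (a b p q : R * R).

Lemma msize_slice_le X b a : (msize (slice X b a) <= bsize X)%N.
Proof.
rewrite /msize /bsize /= -sum1_card.
rewrite [X in (_ <= X)%N](bigID (fun s => bcrit X s != [::])) /=.
apply: leq_trans (leq_addr _ _).
rewrite big_mkcond /= [X in (_ <= X)%N]big_mkcond /=.
apply: leq_sum => s _.
by rewrite inE; case: (s \in bK X) => //=; case: (bcrit X s).
Qed.

Lemma mem_bX_crit X s c : s \in bK X -> c \in bcrit X s -> s \in bX X c.
Proof. by move=> sK cs; rewrite inE sK; apply/hasP; exists c; rewrite // /leR2 !lexx. Qed.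

Lemma slice_entry_neq0 X b a s c : 0 < a.1 -> 0 < a.2 ->
  s \in bK X -> c \in bcrit X s -> [set l | s \in bX X (lpt b a l)] !=set0.
Proof.
move=> a1 a2 sK cs; exists (`|c.1 - b.1| / a.1 + `|c.2 - b.2| / a.2).
rewrite /= inE sK; apply/hasP; exists c => //.
rewrite /leR2 /lpt /= !mulrDl !mulfVK ?gt_eqF //; apply/andP; split.
- have : 0 <= `|c.2 - b.2| / a.2 * a.1 by rewrite !mulr_ge0 // ?invr_ge0 ltW.
  have := ler_norm (c.1 - b.1); lra.
- have : 0 <= `|c.1 - b.1| / a.1 * a.2 by rewrite !mulr_ge0 // ?invr_ge0 ltW.
  have := ler_norm (c.2 - b.2); lra.
Qed.

Lemma slice_entry_lbound X b a s : 0 < a.1 ->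
  has_lbound [set l | s \in bX X (lpt b a l)].
Proof.
move=> a1; have [m Hm] := seq_has_lbound (fun c : R * R => (c.1 - b.1) / a.1) (bcrit X s).
exists m => l; rewrite /= inE => /andP[_ /hasP[c cs]].
rewrite /leR2 /lpt /= => /andP[cl _].
by apply: le_trans (Hm c cs) _; rewrite ler_pdivrMr //; lra.
Qed.

Lemma slice_valid X b a : valid_bifilt X -> 0 < a.1 -> 0 < a.2 ->
  valid_monofilt (slice X b a).
Proof.
move=> [[K0 _] [Hcl _]] a1 a2.
have memK s : (s \in mK (slice X b a)) = (s \in bK X) && (bcrit X s != [::]).
  by rewrite /= inE.
split; first split.
- by rewrite memK (negbTE K0).
- move=> s t; rewrite !memK => /andP[sK]; case E: (bcrit X s) => [|c ?] // _ ts t0.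
  have cs : c \in bcrit X s by rewrite E mem_head.
  have /Hcl/(_ ts t0) := mem_bX_crit sK cs.
  rewrite inE => /andP[-> /hasP[c' c't _]] /=.
  by apply/eqP => Et; rewrite Et in c't.
- move=> s t; rewrite memK => /andP[sK]; case E: (bcrit X s) => [|c ?] // _ ts t0 /=.
  have cs : c \in bcrit X s by rewrite E mem_head.
  apply: lb_le_inf; first exact: slice_entry_neq0 a1 a2 sK cs.
  move=> l Hl; apply: ge_inf; first exact: slice_entry_lbound.
  exact: Hcl Hl ts t0.
Qed.

Lemma ldir_unit p q : ltR2 p q ->
  [/\ 0 < (ldir p q).1, 0 < (ldir p q).2 & (ldir p q).1 ^+ 2 + (ldir p q).2 ^+ 2 = 1].
Proof.
case: p q => [p1 p2] [q1 q2]; rewrite /ltR2 /ldir /norm2 /= => /andP[h1 h2].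
set N := Num.sqrt _.
have N0 : 0 < N by rewrite sqrtr_gt0; nra.
have N2 : N ^+ 2 = (q1 - p1) ^+ 2 + (q2 - p2) ^+ 2 by rewrite sqr_sqrtr //; nra.
split; rewrite ?divr_gt0 ?subr_gt0 //.
by rewrite !expr_div_n -mulrDl -N2 divff // expf_neq0 // gt_eqF.
Qed.

Lemma lpt_lam_l p q : lpt (lbase p q) (ldir p q) (lam (ldir p q) p) = p.
Proof. by case: p => p1 p2; rewrite /lpt /lbase /=; congr (_, _); ring. Qed.

Lemma lpt_lam_r p q : ltR2 p q -> lpt (lbase p q) (ldir p q) (lam (ldir p q) q) = q.
Proof.
move=> pq; have [a1 a2 _] := ldir_unit pq.
move: pq a1 a2; case: p q => [p1 p2] [q1 q2]; rewrite /ltR2 /= => /andP[h1 h2].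
rewrite /lpt /lbase /lam /ldir /norm2 /=.
set N := Num.sqrt _ => a1 a2.
have N0 : N != 0 by apply: contraTneq a1 => ->; rewrite invr0 mulr0 ltxx.
have S0 : (q1 - p1) / N + (q2 - p2) / N != 0 by rewrite gt_eqF // addr_gt0.
have S0' : (q1 - p1) + (q2 - p2) != 0 by rewrite gt_eqF //; lra.
congr (_, _); field; rewrite ?N0 ?S0 //= -mulrDl mulf_neq0 // invr_eq0.
Qed.

Lemma lbase_is_slice p q : ltR2 p q -> is_slice (lbase p q) (ldir p q).
Proof.
move=> pq; have [a1 a2 a3] := ldir_unit pq.
have S0 : (ldir p q).1 + (ldir p q).2 != 0 by rewrite gt_eqF // addr_gt0.
split => //; rewrite /lbase; move: S0; case: (ldir p q) => a1' a2' S0.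
by rewrite /lpt /lam /=; field.
Qed.

Lemma lam_lt a p q : 0 < a.1 -> 0 < a.2 -> ltR2 p q -> lam a p < lam a q.
Proof. by move=> a1 a2 /andP[h1 h2]; rewrite /lam ltr_pM2r ?invr_gt0 ?addr_gt0 //; lra. Qed.

Lemma traverses_lbase (B1 B2 : set (R * R)) p q : B1 p -> B2 q -> ltR2 p q ->
  traverses B1 B2 (lbase p q) (ldir p q).
Proof.
move=> Bp Bq pq; split; first exact: lbase_is_slice.
by split; [exists (lam (ldir p q) p); rewrite lpt_lam_l
          | exists (lam (ldir p q) q); rewrite lpt_lam_r].
Qed.

Lemma Phi_unit_sq (phi : featmap R) X p q : unit_sq p -> unit_sq q ->
  Phi phi X p q = weight (ldir p q) *
    phi V (slice X (lbase p q) (ldir p q)) (lam (ldir p q) p, lam (ldir p q) q).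
Proof. by move=> Sp Sq; rewrite /Phi /chiR !asboolT // !mul1r. Qed.

End Slices.

Section Grid.
Variables (R : realType) (s : nat).

Lemma side_gt0 : 0 < side R s.
Proof. by rewrite invr_gt0 exprn_gt0. Qed.

Lemma gbox_unit_sq (i j : 'I_(2 ^ s)) : @gbox R s i j `<=` @unit_sq R.
Proof.
have up (m : 'I_(2 ^ s)) : m.+1%:R * side R s <= 1.
  by rewrite ler_pdivrMr ?exprn_gt0 // mul1r -natrX ler_nat ltn_ord.
have lo (m : 'I_(2 ^ s)) : 0 <= m%:R * side R s by rewrite mulr_ge0 // ltW // side_gt0.
move=> x [/andP[x1 x2] /andP[y1 y2]]; split; apply/andP; split.
- exact: le_trans (lo i) x1.
- exact: le_trans x2 (up i).
- exact: le_trans (lo j) y1.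
- exact: le_trans y2 (up j).
Qed.

Lemma gcenter_in_gbox (i j : 'I_(2 ^ s)) : @gbox R s i j (@gcenter R s i j).
Proof.
have := side_gt0; rewrite /gbox /gcenter /= => sp.
by split; apply/andP; split; rewrite ler_pM2r // -?natr1 ?lerDl ?lerD2l // invf_le1; lra.
Qed.

End Grid.

Section SliceComparison.
Variables (R : realType) (F : fieldType) (k : nat) (v1 v2 v3 : R).
Variable phi : featmap R.
(* Otherwise Set Implicit Arguments would make its finType argument implicit. *)
Arguments phi : clear implicits.
Variables (V : finType) (X : bifilt R V) (n : nat).
Variables (B1 B2 : set (R * R)) (c1 c2 p q : R * R).
Hypotheses (hX : valid_bifilt X) (hn : bsize X = n).
Hypotheses (hc : ltR2 c1 c2) (hpq : ltR2 p q) (hp : B1 p) (hq : B2 q).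

Local Notation al := (ldir p q).
Local Notation ac := (ldir c1 c2).
Local Notation Yl := (slice X (lbase p q) al).
Local Notation Yc := (slice X (lbase c1 c2) ac).
Local Notation xl := (lam al p, lam al q).
Local Notation xc := (lam ac c1, lam ac c2).

Let msize_le b a : (msize (slice X b a))%:R <= n%:R :> R.
Proof. by rewrite ler_nat -hn msize_slice_le. Qed.

Let valid_Yl : valid_monofilt Yl.
Proof. by have [a1 a2 _] := ldir_unit hpq; exact: slice_valid. Qed.

Let valid_Yc : valid_monofilt Yc.
Proof. by have [a1 a2 _] := ldir_unit hc; exact: slice_valid. Qed.

Let Delta_xl : Delta1 xl.
Proof. by have [a1 a2 _] := ldir_unit hpq; exact: lam_lt. Qed.

Let Delta_xc : Delta1 xc.
Proof. by have [a1 a2 _] := ldir_unit hc; exact: lam_lt. Qed.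

Let traverses_l : traverses B1 B2 (lbase p q) al.
Proof. exact: traverses_lbase. Qed.

Lemma stability_term_le_Dsup : 0 <= v3 -> int_stable F k phi v3 ->
  ((weight ac * `|phi V Yc xl - phi V Yl xl|)%:E
     <= (v3 * n%:R / Num.sqrt 2)%:E * Dsup F k X B1 B2 c1 c2)%E.
Proof.
move=> hv3 hst; have [a1 a2 a3] := ldir_unit hc.
have wc0 := weight_ge0 a1 a2; have wc_le := unit_weight_le a1 a2 a3.
have Hst := hst _ _ _ _ valid_Yc valid_Yl erefl _ Delta_xl.
rewrite EFinM; apply: le_trans (lee_wpmul2l _ Hst) _; first by rewrite lee_fin.
rewrite muleA -EFinM.
apply: le_trans (_ : (v3 * n%:R / Num.sqrt 2)%:E * dB F k Yc Yl <= _)%E.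
  apply: lee_wpmul2r; first exact: dB_ge0.
  rewrite lee_fin [X in _ <= X]mulrC; apply: ler_pM; rewrite ?mulr_ge0 //.
  by rewrite ler_wpM2l.
apply: lee_wpmul2l; first by rewrite lee_fin !mulr_ge0 // ?invr_ge0 sqrtr_ge0.
by apply: ereal_sup_ubound; exists (lbase p q), al.
Qed.

Lemma bound_term_le_Wsup : 0 <= v1 -> abs_bounded phi v1 ->
  ((`|weight ac - weight al| * phi V Yl xl)%:E
     <= (v1 * n%:R)%:E * Wsup B1 B2 c1 c2)%E.
Proof.
move=> hv1 hab; have /andP[_ A_le] := hab _ _ valid_Yl _ Delta_xl.
apply: le_trans (_ : (v1 * n%:R)%:E * (`|weight ac - weight al|)%:E <= _)%E.
  by rewrite -EFinM lee_fin mulrC ler_wpM2r // (le_trans A_le) // ler_wpM2l.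
apply: lee_wpmul2l; first by rewrite lee_fin mulr_ge0.
by apply: ereal_sup_ubound; exists (lbase p q), al.
Qed.

Lemma lam_dist_le_Lsup :
  ((Num.max `|lam al p - lam ac c1| `|lam al q - lam ac c2|)%:E <= Lsup B1 B2 c1 c2)%E.
Proof.
rewrite EFin_max ge_max; apply/andP; split; rewrite le_max; apply/orP; [left|right].
- apply: ereal_sup_ubound; exists (lbase p q), al, p.
  by do !split => //; exists (lam al p); rewrite lpt_lam_l.
- apply: ereal_sup_ubound; exists (lbase p q), al, q.
  by do !split => //; exists (lam al q); rewrite lpt_lam_r.
Qed.

Lemma lipschitz_term_le_Lsup : 0 <= v2 -> lipschitz_fm phi v2 ->
  ((weight ac * `|phi V Yc xl - phi V Yc xc|)%:E
     <= (v2 * n%:R)%:E * Lsup B1 B2 c1 c2)%E.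
Proof.
move=> hv2 hlip; have [a1 a2 a3] := ldir_unit hc.
have wc0 := weight_ge0 a1 a2; have wc_le := unit_weight_le a1 a2 a3.
have Hlip := hlip _ _ valid_Yc _ _ Delta_xl Delta_xc.
apply: le_trans (lee_wpmul2l _ lam_dist_le_Lsup); last by rewrite lee_fin mulr_ge0.
rewrite -EFinM lee_fin; set M := Num.max _ _.
have s2 : 0 < Num.sqrt 2 :> R by rewrite sqrtr_gt0.
have wN : weight ac * norm2 (lam al p - lam ac c1, lam al q - lam ac c2) <= M.
  apply: le_trans (ler_pM wc0 (sqrtr_ge0 _) wc_le (norm2_le_max _ _)) _.
  by rewrite mulrA mulVf ?gt_eqF // mul1r.
apply: le_trans (ler_wpM2l wc0 Hlip) _.
rewrite mulrCA; apply: ler_pM; rewrite ?mulr_ge0 ?sqrtr_ge0 //.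
by rewrite ler_wpM2l.
Qed.

Hypotheses (hB1 : B1 `<=` @unit_sq R) (hB2 : B2 `<=` @unit_sq R).
Hypotheses (hc1 : B1 c1) (hc2 : B2 c2).

Lemma Phi_box_pair_le : 0 <= v1 -> 0 <= v2 -> 0 <= v3 ->
  abs_bounded phi v1 -> lipschitz_fm phi v2 -> int_stable F k phi v3 ->
  ((`|Phi phi X p q - Phi phi X c1 c2|)%:E
     <= (v3 * n%:R / Num.sqrt 2)%:E * Dsup F k X B1 B2 c1 c2
      + (v1 * n%:R)%:E * Wsup B1 B2 c1 c2
      + (v2 * n%:R)%:E * Lsup B1 B2 c1 c2)%E.
Proof.
move=> hv1 hv2 hv3 hab hlip hst.
rewrite !Phi_unit_sq; [|exact: hB1|exact: hB2|exact: hB1|exact: hB2].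
have [a1 a2 _] := ldir_unit hc.
have /andP[A0 _] := hab _ _ valid_Yl _ Delta_xl.
apply: le_trans (_ : (_ + _ + _)%:E <= _)%E.
  by rewrite lee_fin; apply: (@weighted_dist_le R _ _ _ (phi V Yc xl)); last exact: weight_ge0.
rewrite !EFinD; apply: leeD; first apply: leeD.
- exact: stability_term_le_Dsup.
- exact: bound_term_le_Wsup.
- exact: lipschitz_term_le_Lsup.
Qed.

End SliceComparison.

Theorem lemma1 (R : realType) (F : fieldType) (k : nat) (phi : featmap R)
  (v1 v2 v3 : R) (V : finType) (X : bifilt R V) (n s : nat)
  (i1 j1 i2 j2 : 'I_(2 ^ s)) :
  0 <= v1 -> 0 <= v2 -> 0 <= v3 ->
  is_feature_map phi -> abs_bounded phi v1 -> lipschitz_fm phi v2 ->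
  int_stable F k phi v3 ->
  valid_bifilt X -> bsize X = n ->
  ltR2 (@gcenter R s i1 j1) (@gcenter R s i2 j2) ->
  forall p q : R * R, @gbox R s i1 j1 p -> @gbox R s i2 j2 q -> ltR2 p q ->
    ((`|Phi phi X p q - Phi phi X (@gcenter R s i1 j1) (@gcenter R s i2 j2)|)%:E
     <= (v3 * n%:R / Num.sqrt 2)%:E
          * Dsup F k X (@gbox R s i1 j1) (@gbox R s i2 j2) (@gcenter R s i1 j1) (@gcenter R s i2 j2)
        + (v1 * n%:R)%:E
          * Wsup (@gbox R s i1 j1) (@gbox R s i2 j2) (@gcenter R s i1 j1) (@gcenter R s i2 j2)
        + (v2 * n%:R)%:E
          * Lsup (@gbox R s i1 j1) (@gbox R s i2 j2) (@gcenter R s i1 j1) (@gcenter R s i2 j2))%E.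
Proof.
move=> hv1 hv2 hv3 _ hab hlip hst hX hn hc p q hp hq hpq.
by apply: Phi_box_pair_le => //; exact: gbox_unit_sq || exact: gcenter_in_gbox.
Qed.
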